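(* Let $b\ge 2$ be even and $n\ge 1$. Then $\{b^{n+i}+1 : i\in\{0,1,\dots,n\}\}$ is the minimal system of generators of $SC^{+}(b,n)$; in particular $e(SC^{+}(b,n))=n+1$.
   Context: For an even integer $b\ge2$ and $n\ge0$, $SC^{+}(b,n)=\langle\{b^{n+i}+1: i\in\mathbb{N}\}\rangle$, the submonoid of $(\mathbb{N},+)$ generated by these numbers (a numerical semigroup). The minimal system of generators of a numerical semigroup $S$ is the unique generating set no proper subset of which generates $S$; $e(S)$ is its cardinality. *)

From mathcomp Require Import all_boot.
Set Implicit Arguments. Unset Strict Implicit. Unset Printing Implicit Defensive.

Inductive gen_monoid (G : nat -> Prop) : nat -> Prop :=
| gm0 : gen_monoid G 0
| gm_gen x : G x -> gen_monoid G x
| gm_add x y : gen_monoid G x -> gen_monoid G y -> gen_monoid G (x + y).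

Definition SCplus (b n : nat) : nat -> Prop :=
  gen_monoid (fun x => exists i, x = b ^ (n + i) + 1).

Definition minimal_generating_system (A S : nat -> Prop) : Prop :=
  (forall x, gen_monoid A x <-> S x) /\
  (forall B : nat -> Prop,
     (forall x, B x -> A x) -> (exists x, A x /\ ~ B x) ->
     ~ (forall x, gen_monoid B x <-> S x)).

From mathcomp Require Import all_boot zify ring.

Set Implicit Arguments.
Unset Strict Implicit.
Unset Printing Implicit Defensive.

(* Write c = b^n and g_i = b^(n+i) + 1 = c b^i + 1.  Since g_0 = c + 1 and
   c^2 = 1 mod (c + 1), adding multiples of g_0 lets one climb from a smaller
   element with the right residue: g_(i+2n) = g_i + b^(n+i) (c - 1) g_0, and
   for 0 < j <= n, g_(n+j) = b^j g_(n-j) + (c - 1)(b^j - 1) g_0; so g_0, ..., g_n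
   generate every g_i.  For minimality, each g_i with i <= n is 1 mod c and
   at least c + 1; a sum of k such numbers is k mod c and at least k (c + 1), so
   a sum that is 1 mod c has one summand or at least c + 1 summands, and the
   latter is at least (c + 1)^2 > g_n. *)

Section GeneratedMonoid.

Variable G : nat -> Prop.

Lemma gen_monoid_mull m x : gen_monoid G x -> gen_monoid G (m * x).
Proof.
move=> Gx; elim: m => [|m IHm]; first exact: gm0.
by rewrite mulSn; apply: gm_add.
Qed.

Lemma gen_monoid_sub (H : nat -> Prop) :
  (forall x, G x -> gen_monoid H x) -> forall y, gen_monoid G y -> gen_monoid H y.
Proof.
move=> GH y; elim=> [|x /GH //|x z _ Hx _ Hz]; first exact: gm0.
exact: gm_add.
Qed.

Variables c l : nat.
Hypothesis G_mod : forall x, G x -> x = 1 %[mod c].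
Hypothesis G_ge : forall x, G x -> l <= x.

(* [k] counts the generators in a decomposition of [y]. *)
Lemma gen_monoid_count y : gen_monoid G y -> exists k,
  [/\ y = k %[mod c], k * l <= y, (k = 0 -> y = 0) & (k = 1 -> G y)].
Proof.
elim=> [|x Gx|x z _ [k1 [ek1 lk1 x0 Gk1]] _ [k2 [ek2 lk2 z0 Gk2]]].
- by exists 0.
- by exists 1; rewrite mul1n G_ge // G_mod.
- exists (k1 + k2); split; first by rewrite -modnDm ek1 ek2 modnDm.
  + by rewrite mulnDl leq_add.
  + by move/eqP; rewrite addn_eq0 => /andP[/eqP/x0 -> /eqP/z0 ->].
  + move=> k12; case: k1 k12 {ek1 lk1} x0 Gk1 => [|[|k1]] //= k12 x0 Gk1.
    * by rewrite x0 // add0n; apply: Gk2.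
    * by rewrite z0 ?addn0; [apply: Gk1 | lia].
Qed.

Lemma gen_monoid_small y : 1 < c -> gen_monoid G y ->
  y = 1 %[mod c] -> y < c.+1 * l -> G y.
Proof.
move=> c_gt1 /gen_monoid_count [k [eyk lky _ Gk]]; rewrite {}eyk => /eqP ek1 y_lt.
case: k => [|[|k]] in ek1 lky Gk *.
- by move: ek1; rewrite mod0n modn_small.
- exact: Gk.
- have : c.+1 <= k.+2 by move: ek1; rewrite eqn_mod_dvd // subn1 => /dvdn_leq; lia.
  by move=> /leq_mul/(_ (leqnn l))/leq_trans/(_ lky); lia.
Qed.

End GeneratedMonoid.

Lemma sqr_mul_add1 c u : 0 < c -> 0 < u ->
  c * c * u + 1 = (c * c + u) + (c - 1) * (u - 1) * c.+1.
Proof.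
case: c => // c _; case: u => // u _.
by rewrite !subn1 /=; ring.
Qed.

Lemma sqr_mul_add1_shift c v : 0 < c ->
  c * c * v + 1 = (v + 1) + (c - 1) * v * c.+1.
Proof. by case: c => // c _; rewrite subn1 /=; ring. Qed.

Section SCplusGenerators.

Variables b n : nat.
Hypothesis b_gt1 : 1 < b.

Definition SCplus_gens (x : nat) : Prop := exists2 i, i <= n & x = b ^ (n + i) + 1.

Lemma SCplus_gens_bounds x : SCplus_gens x ->
  [/\ x = 1 %[mod b ^ n], b ^ n < x & x <= b ^ n * b ^ n + 1].
Proof.
move=> [i le_in ->]; split; first by rewrite expnD mulnC modnMDl.
  by rewrite addn1 ltnS leq_pexp2l //; lia.
by rewrite -expnD leq_add2r leq_pexp2l //; lia.
Qed.

Hypothesis n_gt0 : 0 < n.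

Lemma gen_monoid_SCplus_gens_expn i : gen_monoid SCplus_gens (b ^ (n + i) + 1).
Proof.
elim/ltn_ind: i => i IHi.
have c_gt0 : 0 < b ^ n by rewrite expn_gt0; lia.
have g0 : SCplus_gens (b ^ n).+1 by exists 0; rewrite ?addn0 ?addn1.
have [le_in | lt_ni] := leqP i n; first by apply: gm_gen; exists i.
have [le_i2n | lt_2ni] := leqP i (n + n).
- have -> : b ^ (n + i) = b ^ n * b ^ n * b ^ (i - n) by rewrite -!expnD; congr (_ ^ _); lia.
  rewrite sqr_mul_add1 // ?expn_gt0; last by lia.
  have -> : b ^ n * b ^ n = b ^ (i - n) * b ^ (n + (n - (i - n))).
    by rewrite -!expnD; congr (_ ^ _); lia.
  rewrite -{2}(muln1 (b ^ (i - n))) -mulnDr.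
  apply: gm_add; apply: gen_monoid_mull; apply: gm_gen => //.
  by exists (n - (i - n)); first lia.
- have -> : b ^ (n + i) = b ^ n * b ^ n * b ^ (n + (i - (n + n))).
    by rewrite -!expnD; congr (_ ^ _); lia.
  rewrite sqr_mul_add1_shift //; apply: gm_add; first by apply: IHi; lia.
  by apply/gen_monoid_mull/gm_gen.
Qed.

Lemma SCplus_gens_generate x : gen_monoid SCplus_gens x <-> SCplus b n x.
Proof.
split; apply: gen_monoid_sub => y.
- by move=> [i _ ->]; apply: gm_gen; exists i.
- by move=> [i ->]; apply: gen_monoid_SCplus_gens_expn.
Qed.

Lemma SCplus_gens_irreducible (B : nat -> Prop) x :
  (forall y, B y -> SCplus_gens y) -> SCplus_gens x -> gen_monoid B x -> B x.
Proof.
move=> BA /SCplus_gens_bounds [ex1 _ lex] Bx.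
have c_gt1 : 1 < b ^ n by rewrite -(expn0 b) ltn_exp2l; lia.
have B_mod y : B y -> y = 1 %[mod b ^ n] by move/BA/SCplus_gens_bounds => [].
have B_gt y : B y -> (b ^ n).+1 <= y by move/BA/SCplus_gens_bounds => [].
apply: (gen_monoid_small B_mod B_gt c_gt1 Bx ex1).
by rewrite mulSn mulnS; lia.
Qed.

End SCplusGenerators.

Theorem mainTheorem15 (b n : nat) :
  2 <= b -> ~~ odd b -> 1 <= n ->
  minimal_generating_system
    (fun x => exists2 i, i <= n & x = b ^ (n + i) + 1) (SCplus b n) /\
  (* e(SC^+(b,n)) = n + 1: the minimal system {b^(n+i)+1 : 0 <= i <= n}
     enumerated without repetition has exactly n + 1 elements *)
  uniq [seq b ^ (n + i) + 1 | i <- iota 0 n.+1] /\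
  size [seq b ^ (n + i) + 1 | i <- iota 0 n.+1] = n.+1.
Proof.
move=> b_gt1 _ n_gt0.
have generate := SCplus_gens_generate b_gt1 n_gt0.
split; [split=> // B BA [x [Ax nBx]] B_generate | split].
- apply/nBx/(SCplus_gens_irreducible b_gt1 n_gt0 BA Ax).
  by apply/B_generate/generate/gm_gen.
- rewrite map_inj_uniq ?iota_uniq // => i j.
  by move=> /addIn /(expnI b_gt1) /addnI.
- by rewrite size_map size_iota.
Qed.
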